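(* If $\lambda$ is a panmagic permutation of $\Omega_m$ and $\rho$ is a panmagic permutation of $\Omega_n$, then the permutation $\lambda\,\dot\times\,\rho$ of $\Omega_{mn}$ defined by $(\lambda\,\dot\times\,\rho)(jn+s)=\lambda(j)\,n+\rho(s)$ for $j\in\Omega_m$, $s\in\Omega_n$, is panmagic.
   Context: $\Omega_n=\{0,1,\dots,n-1\}$. A permutation $\pi$ of $\Omega_n$ is panmagic if its permutation matrix $P_\pi$ (with $(i,j)$ entry $1$ if $i=\pi(j)$ and $0$ otherwise) is panmagic, i.e. the sums of its entries along all rows, all columns, all upward diagonals $\{(i,j): i+j\equiv k \pmod n\}$ and all downward diagonals $\{(i,j): i-j\equiv k\pmod n\}$, $k\in\Omega_n$, are equal; equivalently, the maps $j\mapsto\pi(j)-j$ and $j\mapsto\pi(j)+j$ modulo $n$ are bijections of $\Omega_n$. *)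

From mathcomp Require Import all_boot all_order all_algebra all_fingroup.
Set Implicit Arguments. Unset Strict Implicit. Unset Printing Implicit Defensive.

(* Omega_n is 'I_n ; permutations of Omega_n are {perm 'I_n}. *)

Definition pmx n (pi : {perm 'I_n}) (i j : 'I_n) : nat := (i == pi j).

(* panmagic matrix: all row, column, upward-diagonal (i+j = k mod n) and
   downward-diagonal (i-j = k mod n) sums are equal to one common value. *)
Definition panmagic_mx n (A : 'I_n -> 'I_n -> nat) : Prop :=
  exists c : nat,
    (forall i : 'I_n, \sum_(j < n) A i j = c) /\
    (forall j : 'I_n, \sum_(i < n) A i j = c) /\
    (forall k : 'I_n, \sum_(i < n) \sum_(j < n | (i + j) %% n == k) A i j = c) /\
    (forall k : 'I_n, \sum_(i < n) \sum_(j < n | (i + (n - j)) %% n == k) A i j = c).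

Definition panmagic n (pi : {perm 'I_n}) : Prop := panmagic_mx (pmx pi).

(* the product permutation: (lam .x rho)(j n + s) = lam(j) n + rho(s),
   where x = j n + s with j = x %/ n < m and s = x %% n < n. *)
Lemma pos_of_ord m n (x : 'I_(m * n)) : (0 < n)%N /\ (0 < m)%N.
Proof. by case: x => x /=; case: m => [|m]; case: n => [|n] //; rewrite ?muln0. Qed.

Lemma div_lt m n (x : 'I_(m * n)) : (x %/ n < m)%N.
Proof. have [n0 _] := pos_of_ord x; by rewrite ltn_divLR. Qed.

Lemma mod_lt m n (x : 'I_(m * n)) : (x %% n < n)%N.
Proof. have [n0 _] := pos_of_ord x; by rewrite ltn_mod. Qed.

Definition ordq m n (x : 'I_(m * n)) : 'I_m := Ordinal (div_lt x).
Definition ordr m n (x : 'I_(m * n)) : 'I_n := Ordinal (mod_lt x).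

Lemma prod_perm_lt m n (lam : {perm 'I_m}) (rho : {perm 'I_n}) (x : 'I_(m * n)) :
  (lam (ordq x) * n + rho (ordr x) < m * n)%N.
Proof.
apply: (@leq_trans ((lam (ordq x)).+1 * n)); last by rewrite leq_mul2r ltn_ord orbT.
by rewrite mulSn addnC ltn_add2r.
Qed.

Definition prod_fun m n (lam : {perm 'I_m}) (rho : {perm 'I_n})
  (x : 'I_(m * n)) : 'I_(m * n) := Ordinal (prod_perm_lt lam rho x).

Lemma prod_fun_inj m n (lam : {perm 'I_m}) (rho : {perm 'I_n}) :
  injective (prod_fun lam rho).
Proof.
move=> x y /(congr1 val) /= E.
have [n0 _] := pos_of_ord x.
have E1 := congr1 (divn^~ n) E; have E2 := congr1 (modn^~ n) E.
rewrite !divnMDl // !divn_small ?ltn_ord // !addn0 in E1.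
rewrite !modnMDl !modn_small ?ltn_ord // in E2.
move/val_inj/perm_inj: E1 => E1; move/val_inj/perm_inj: E2 => E2.
have e1 := congr1 val E1; have e2 := congr1 val E2; simpl in e1, e2.
by apply: val_inj; rewrite /= (divn_eq x n) (divn_eq y n) e1 e2.
Qed.

Definition prod_perm m n (lam : {perm 'I_m}) (rho : {perm 'I_n}) : {perm 'I_(m * n)} :=
  perm (@prod_fun_inj m n lam rho).

Lemma prod_permE m n (lam : {perm 'I_m}) (rho : {perm 'I_n}) (j : 'I_m) (s : 'I_n)
  (x : 'I_(m * n)) : val x = (j * n + s)%N ->
  val (prod_perm lam rho x) = (lam j * n + rho s)%N.
Proof.
move=> hx; rewrite /prod_perm permE /=.
have [n0 _] := pos_of_ord x.
have -> : ordq x = j by apply: val_inj; rewrite /= hx divnMDl // divn_small ?addn0.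
have -> : ordr x = s by apply: val_inj; rewrite /= hx modnMDl modn_small.
by [].
Qed.

(* A permutation pi of 'I_n is panmagic iff the maps j |-> pi j + j and
   j |-> pi j - j are injective modulo n: each diagonal of the permutation
   matrix then carries exactly one 1.  Writing x = a n + c, the product
   permutation P satisfies P x +- x = (lam a +- a) n + (rho c +- c).  A
   congruence between two such numbers modulo m n reduces modulo n to a
   congruence for rho c +- c, which forces equal low digits c; the remaining
   multiple of n, divided by n, gives a congruence for lam a +- a modulo m,
   which forces equal high digits a. *)

From mathcomp Require Import all_boot all_order all_algebra all_fingroup.
Set Implicit Arguments. Unset Strict Implicit. Unset Printing Implicit Defensive.
Import GRing.Theory.

Section PermutationMatrix.
Variables (n : nat) (pi : {perm 'I_n}).

Lemma row_sum_pmx (i : 'I_n) : \sum_(j < n) pmx pi i j = 1.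
Proof.
rewrite (bigD1 ((pi^-1)%g i)) //= /pmx permKV eqxx big1 // => j.
by apply: contraNeq; rewrite eqb0 negbK => /eqP ->; rewrite permK.
Qed.

Lemma col_sum_pmx (j : 'I_n) : \sum_(i < n) pmx pi i j = 1.
Proof. by rewrite (bigD1 (pi j)) //= /pmx eqxx big1 // => i /negbTE ->. Qed.

Lemma cond_sum_pmx (P : 'I_n -> 'I_n -> bool) :
  \sum_(i < n) \sum_(j < n | P i j) pmx pi i j = #|[pred j | P (pi j) j]|.
Proof.
rewrite -sum1_card [RHS]big_mkcond (exchange_big_dep predT) //=.
apply: eq_bigr => j _; rewrite big_mkcond (bigD1 (pi j)) //= /pmx eqxx big1.
  by rewrite addn0 inE; case: (P _ _).
by move=> i /negbTE ->; case: (P _ _).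
Qed.

End PermutationMatrix.

Lemma card_fiber1P n (f : 'I_n -> nat) : (forall j, f j < n) ->
  (forall k : 'I_n, #|[pred j | f j == k]| = 1) <-> injective f.
Proof.
move=> f_lt; pose F j := Ordinal (f_lt j).
split=> [fiber1 x y fxy | f_inj k].
  have /card_le1_eqP fiber_le1 : #|[pred j | f j == F x]| <= 1 by rewrite fiber1.
  by apply/esym/fiber_le1; rewrite inE /= ?fxy.
have F_inj : injective F by move=> x y /(congr1 val) /f_inj.
by rewrite -(cards1 k) -(card_preimset _ F_inj); apply: eq_card => j; rewrite !inE.
Qed.

Lemma panmagic_modnP n (pi : {perm 'I_n}) :
  panmagic pi <->
  injective (fun j : 'I_n => (pi j + j) %% n) /\
  injective (fun j : 'I_n => (pi j + (n - j)) %% n).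
Proof.
have mod_lt (f : 'I_n -> nat) j : f j %% n < n.
  by rewrite ltn_mod (leq_ltn_trans _ (ltn_ord j)).
split=> [[c [rows [_ [up down]]]] | [up_inj down_inj]].
  have c1 (k : 'I_n) : c = 1 by rewrite -(rows k) row_sum_pmx.
  by split; apply/(card_fiber1P (mod_lt _)) => k;
    [move: (up k) | move: (down k)]; rewrite cond_sum_pmx -(c1 k).
exists 1; do ![split] => [i|j|k|k];
  rewrite ?row_sum_pmx ?col_sum_pmx ?cond_sum_pmx //;
  exact: (card_fiber1P (mod_lt _)).2.
Qed.

Lemma ord_digits m n (x : 'I_(m * n)) : val x = ordq x * n + ordr x.
Proof. exact: divn_eq. Qed.

Lemma ord_digits_inj m n (x y : 'I_(m * n)) :
  ordq x = ordq y -> ordr x = ordr y -> x = y.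
Proof. by move=> eq_q eq_r; apply: val_inj; rewrite /= !ord_digits eq_q eq_r. Qed.

Lemma prod_perm_val m n (lam : {perm 'I_m}) (rho : {perm 'I_n}) (x : 'I_(m * n)) :
  val (prod_perm lam rho x) = lam (ordq x) * n + rho (ordr x).
Proof. by rewrite permE. Qed.

Section InjectiveModulo.
Local Open Scope ring_scope.

Definition injective_mod n (f : 'I_n -> int) : Prop :=
  forall x y, (f x = f y %[mod n])%Z -> x = y.

Lemma eq_injective_mod n (f g : 'I_n -> int) :
  (forall j, (f j = g j %[mod n])%Z) -> injective_mod f <-> injective_mod g.
Proof.
by move=> fg; split=> inj x y; [rewrite -!fg | rewrite !fg]; exact: inj.
Qed.

Lemma injective_mod_nat n (f : 'I_n -> nat) :
  injective_mod (fun j => (f j)%:Z) <-> injective (fun j => (f j %% n)%N).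
Proof.
split=> f_inj x y; first by move/(congr1 Posz); rewrite -!modz_nat => /f_inj.
by rewrite !modz_nat => -[] /f_inj.
Qed.

Lemma panmagicP n (pi : {perm 'I_n}) :
  panmagic pi <->
  injective_mod (fun j => (pi j)%:Z + j%:Z) /\
  injective_mod (fun j => (pi j)%:Z - j%:Z).
Proof.
have down_mod (j : 'I_n) : ((pi j + (n - j))%N%:Z = (pi j)%:Z - j%:Z %[mod n])%Z.
  by rewrite PoszD -subzn 1?ltnW // addrCA addrC modzDr.
split=> [/panmagic_modnP[/injective_mod_nat up /injective_mod_nat down] |
         [up down]].
  by split; [exact: up | exact/(eq_injective_mod down_mod)].
apply/panmagic_modnP; split; apply/injective_mod_nat; first exact: up.
exact/(eq_injective_mod down_mod).
Qed.

Lemma injective_mod_digits m n (g : 'I_m -> int) (h : 'I_n -> int) :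
  injective_mod g -> injective_mod h ->
  injective_mod (fun x : 'I_(m * n) => g (ordq x) * n%:Z + h (ordr x)).
Proof.
move=> g_inj h_inj x y /eqP; rewrite eqz_mod_dvd PoszM.
set a := ordq x; set a' := ordq y; set c := ordr x; set c' := ordr y.
have -> : g a * n + h c - (g a' * n + h c') = (g a - g a') * n + (h c - h c').
  by rewrite opprD addrACA mulrBl.
move=> dvd_mn; have [n_gt0 _] := pos_of_ord x.
have dvd_n : (n %| h c - h c')%Z.
  rewrite -(rpredDl _ (dvdz_mull (g a - g a') (dvdzz n))).
  by apply: dvdz_trans dvd_mn; rewrite dvdz_mull.
have eq_c : c = c' by apply: h_inj; apply/eqP; rewrite eqz_mod_dvd.
move: dvd_mn; rewrite eq_c subrr addr0 dvdz_mul2r ?eqz_nat -?lt0n // => dvd_m.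
have eq_a : a = a' by apply: g_inj; apply/eqP; rewrite eqz_mod_dvd.
exact: ord_digits_inj eq_a eq_c.
Qed.

End InjectiveModulo.

Theorem corollary3p2 (m n : nat) (lam : {perm 'I_m}) (rho : {perm 'I_n}) :
  panmagic lam -> panmagic rho -> panmagic (prod_perm lam rho).
Proof.
move=> /panmagicP[lam_up lam_down] /panmagicP[rho_up rho_down].
apply/panmagicP; split.
  apply: (eq_injective_mod _).1 (injective_mod_digits lam_up rho_up) => x.
  by rewrite prod_perm_val ord_digits !PoszD !PoszM addrACA -mulrDl.
apply: (eq_injective_mod _).1 (injective_mod_digits lam_down rho_down) => x.
by rewrite prod_perm_val ord_digits !PoszD !PoszM opprD addrACA -mulrBl.
Qed.
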